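(* Let $(f_n):\underline G=(G_n,p_n)\to\underline H=(H_n,q_n)$ be a level morphism of inverse sequences of groups which induces an isomorphism $\tilde f:\varprojlim G_n\to\varprojlim H_n$, $\tilde f((g_n))=(f_n(g_n))$. If $\underline G$ and $\underline H$ are Mittag-Leffler and $\pi_n(G)$ is countable for all $n$, where $G=\varprojlim G_n$ and $\pi_n:G\to G_n$ is the natural projection, then the morphism $\underline f:\underline G\to\underline H$ of \textbf{Tower-Grp} determined by $(f_n)$ is an isomorphism in \textbf{Tower-Grp}.
   Context: A level morphism $(f_n)$ consists of homomorphisms $f_n:G_n\to H_n$ with $f_n\circ p_n=q_n\circ f_{n+1}$ for all $n$. An inverse sequence $(G_n,p_n)$ is Mittag-Leffler if for every $n_0$ there is $n_1>n_0$ with $p_{n_0n}(G_n)=p_{n_0n_1}(G_{n_1})$ for all $n>n_1$, where $p_{nm}=p_n\circ\cdots\circ p_{m-1}$. \textbf{Tower-Grp}: objects inverse sequences of groups; morphisms $(f_n,\Phi)$ with $\Phi:\mathbb{N}\to\mathbb{N}$, homomorphisms $f_n:G_{\Phi(n)}\to H_n$ such that for all $n'>n$ there is $m\ge\Phi(n),\Phi(n')$ with $f_n\circ p_{\Phi(n)m}=q_{nn'}\circ f_{n'}\circ p_{\Phi(n')m}$, modulo: $(f_n,\Phi)\sim(g_n,\Psi)$ if every $n$ admits $m\ge\Phi(n),\Psi(n)$ with $f_n\circ p_{\Phi(n)m}=g_n\circ p_{\Psi(n)m}$; composition $(g_n\circ f_{\Psi(n)},\Phi\circ\Psi)$. *)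

From mathcomp Require Import all_boot.
Set Implicit Arguments.
Unset Strict Implicit.
Unset Printing Implicit Defensive.

Record grp := Grp {
  gcar :> Type;
  gmul : gcar -> gcar -> gcar;
  gone : gcar;
  ginv : gcar -> gcar;
  gmulA : forall x y z, gmul x (gmul y z) = gmul (gmul x y) z;
  gmul1 : forall x, gmul gone x = x;
  gmulV : forall x, gmul (ginv x) x = gone
}.

Definition is_hom (G H : grp) (f : G -> H) : Prop :=
  forall x y, f (gmul x y) = gmul (f x) (f y).

Record invseq := InvSeq {
  sG :> nat -> grp;
  sp : forall n, sG n.+1 -> sG n;
  sp_hom : forall n, @is_hom (sG n.+1) (sG n) (@sp n)
}.
Arguments sp : clear implicits.

Section Bonding.
Variable S : invseq.

Fixpoint pdown (n k : nat) : S (k + n) -> S n :=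
  match k return S (k + n) -> S n with
  | 0 => fun x => x
  | k'.+1 => fun x => @pdown n k' (sp S (k' + n) x)
  end.

Definition castS (m m' : nat) (e : m = m') (x : S m) : S m' :=
  eq_rect m (fun i => S i) x m' e.

(* p_{nm} : S m -> S n for n <= m; for m < n (never used) it is the
   constant map to the identity element. *)
Definition pnm (n m : nat) : S m -> S n :=
  match (n <= m) as b return (n <= m) = b -> S m -> S n with
  | true => fun h x => @pdown n (m - n) (castS (esym (subnK h)) x)
  | false => fun _ _ => gone (S n)
  end (erefl (n <= m)).
End Bonding.

Definition level_morphism (G H : invseq) (f : forall n, G n -> H n) : Prop :=
  (forall n, is_hom (f n)) /\
  (forall n (x : G n.+1), f n (sp G n x) = sp H n (f n.+1 x)).

Definition thread (G : invseq) (g : forall n, G n) : Prop :=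
  forall n, sp G n (g n.+1) = g n.

(* the induced map  (g_n) |-> (f_n(g_n))  is a bijection of inverse limits
   (it is automatically a homomorphism, so this means: group isomorphism) *)
Definition induces_iso_lim (G H : invseq) (f : forall n, G n -> H n) : Prop :=
  (forall g g', thread g -> thread g' ->
     (forall n, f n (g n) = f n (g' n)) -> forall n, g n = g' n) /\
  (forall h, thread h -> exists g, thread g /\ forall n, f n (g n) = h n).

Definition mittag_leffler (G : invseq) : Prop :=
  forall n0, exists n1, n0 < n1 /\
    forall n, n1 < n -> forall x : G n0,
      (exists y : G n, @pnm G n0 n y = x) <-> (exists z : G n1, @pnm G n0 n1 z = x).

Definition countable_set (T : Type) (A : T -> Prop) : Prop :=
  exists c : {x : T | A x} -> nat, injective c.

Definition proj_image (G : invseq) (n : nat) : G n -> Prop :=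
  fun x => exists g, thread g /\ g n = x.

Definition is_tmor (G H : invseq) (Phi : nat -> nat)
    (f : forall n, G (Phi n) -> H n) : Prop :=
  (forall n, is_hom (f n)) /\
  (forall n n', n < n' -> exists m, Phi n <= m /\ Phi n' <= m /\
     forall x : G m, f n (@pnm G (Phi n) m x) = @pnm H n n' (f n' (@pnm G (Phi n') m x))).

Definition tequiv (G H : invseq) (Phi : nat -> nat) (f : forall n, G (Phi n) -> H n)
    (Psi : nat -> nat) (g : forall n, G (Psi n) -> H n) : Prop :=
  forall n, exists m, Phi n <= m /\ Psi n <= m /\
    forall x : G m, f n (@pnm G (Phi n) m x) = g n (@pnm G (Psi n) m x).

Definition tcomp_idx (Phi Psi : nat -> nat) : nat -> nat := fun n => Phi (Psi n).
Definition tcomp_map (G H K : invseq) (Phi : nat -> nat) (f : forall n, G (Phi n) -> H n)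
    (Psi : nat -> nat) (g : forall n, H (Psi n) -> K n) :
    forall n, G (tcomp_idx Phi Psi n) -> K n :=
  fun n x => g n (f (Psi n) x).

Definition tid_idx : nat -> nat := fun n => n.
Definition tid_map (G : invseq) : forall n, G (tid_idx n) -> G n := fun n x => x.

Definition tower_iso (G H : invseq) (Phi : nat -> nat) (f : forall n, G (Phi n) -> H n) : Prop :=
  exists (Psi : nat -> nat) (g : forall n, H (Psi n) -> G n),
    @is_tmor H G Psi g /\
    @tequiv G G (tcomp_idx Phi Psi) (@tcomp_map G H G Phi f Psi g)
                tid_idx (@tid_map G) /\
    @tequiv H H (tcomp_idx Psi Phi) (@tcomp_map H G H Psi g Phi f)
                tid_idx (@tid_map H).

From mathcomp Require Import all_boot zify.
From Stdlib Require Import ClassicalEpsilon Classical FunctionalExtensionality ProofIrrelevance.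
Set Implicit Arguments.
Unset Strict Implicit.
Unset Printing Implicit Defensive.

(* Let K_n = pi_n(G) ∩ ker f_n.  Surjectivity of f on limits gives lim^1 K = 1: given k
   in K, solve d_i = k_i p_i(d_(i+1)) in pi(G) and correct d by a thread of G with the
   same image under f.  A tower of countable groups with trivial lim^1 is Mittag-Leffler:
   otherwise there are levels n <= m_0 < m_1 < ... and z_j in K_(m_j) with p_(n m_j)(z_j)
   outside p_(n m_(j+1))(K_(m_(j+1))), and the solutions of the lim^1 equation for the
   sequences keeping z_j exactly when e_j, e : nat -> bool, are pairwise distinct at level
   n, which contradicts the countability of pi_n(G).  As lim K = 1 by injectivity of f on
   limits, the Mittag-Leffler property makes the stable images of K trivial: p_(n m) kills
   K_m for m large.  So, with k(n) that large and Psi(n) so large (H is Mittag-Leffler) that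
   p_(k(n) Psi(n))(y) lies in pi(H), g_n(y) = p_(n k(n))(x) for any x in pi_(k(n))(G) with
   f(x) = p_(k(n) Psi(n))(y) is well defined and inverts f in Tower-Grp. *)

Section GroupFacts.
Variable G : grp.
Implicit Types x y z : G.

Lemma mulgV x : gmul x (ginv x) = gone G.
Proof.
transitivity (gmul (gmul (ginv (ginv x)) (ginv x)) (gmul x (ginv x))).
  by rewrite gmulV gmul1.
by rewrite -gmulA [gmul (ginv x) (gmul x (ginv x))]gmulA gmulV gmul1 gmulV.
Qed.

Lemma mulg1 x : gmul x (gone G) = x.
Proof. by rewrite -(gmulV x) gmulA mulgV gmul1. Qed.

Lemma mulKg x y : gmul (ginv x) (gmul x y) = y.
Proof. by rewrite gmulA gmulV gmul1. Qed.

Lemma mulKVg x y : gmul x (gmul (ginv x) y) = y.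
Proof. by rewrite gmulA mulgV gmul1. Qed.

Lemma mulgI x : injective (gmul x).
Proof. by move=> y z e; rewrite -(mulKg x y) e mulKg. Qed.

Lemma invg_unique x y : gmul x y = gone G -> x = ginv y.
Proof. by move=> e; rewrite -(mulg1 x) -(mulgV y) gmulA e gmul1. Qed.

Lemma invg1 : ginv (gone G) = gone G.
Proof. by symmetry; apply: invg_unique; rewrite gmul1. Qed.

Lemma eq_mulVg1 x y : gmul (ginv x) y = gone G -> y = x.
Proof. by move=> e; rewrite -(mulKVg x y) e mulg1. Qed.

End GroupFacts.

Section HomFacts.
Variables (G H : grp) (f : G -> H).
Hypothesis hom_f : is_hom f.

Lemma hom1 : f (gone G) = gone H.
Proof. by apply: (@mulgI _ (f (gone G))); rewrite -hom_f gmul1 mulg1. Qed.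

Lemma homV x : f (ginv x) = ginv (f x).
Proof. by apply: invg_unique; rewrite -hom_f gmulV hom1. Qed.

End HomFacts.

Lemma leq_exists_add n m : n <= m -> exists d, m = d + n.
Proof. by move=> le_nm; exists (m - n); rewrite subnK. Qed.

Notation pn n m := (@pnm _ n m).

Definition subtower (S : invseq) (R : forall i, S i -> Prop) : Prop :=
  forall i x, R i.+1 x -> R i (sp S i x).

Section Bonding.
Variable S : invseq.

Lemma pnm_le n m (le_nm : n <= m) (x : S m) :
  pn n m x = pdown (castS (esym (subnK le_nm)) x).
Proof.
rewrite /pnm; generalize (erefl (n <= m)).
case: {3 4}(n <= m) le_nm => [h e|hf]; last by rewrite hf.
by rewrite (eq_irrelevance h e).
Qed.

Lemma pnm_gt n m (x : S m) : m < n -> pn n m x = gone (S n).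
Proof.
rewrite ltnNge => /negbTE hf; rewrite /pnm; generalize (erefl (n <= m)).
by case: {2 3}(n <= m) => // e; exfalso; rewrite hf in e.
Qed.

Lemma pnmE n k (x : S (k + n)) : pn n (k + n) x = pdown x.
Proof.
rewrite (pnm_le (leq_addl k n)); move: (esym _) => e.
have ek : k + n - n = k by rewrite addnK.
by move: e; rewrite ek => e; rewrite (eq_irrelevance e erefl).
Qed.

Lemma pnm_id n (x : S n) : pn n n x = x.
Proof. exact: (@pnmE n 0 x). Qed.

Lemma pnmS n m (x : S m.+1) : n <= m -> pn n m.+1 x = pn n m (sp S m x).
Proof.
move=> /subnK em; move: x; rewrite -em => x.
by rewrite (@pnmE n (m - n).+1 x) pnmE.
Qed.

Lemma pnm_comp n m k (x : S k) : n <= m -> m <= k -> pn n m (pn m k x) = pn n k x.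
Proof.
move=> le_nm /leq_exists_add [d ek]; subst k; elim: d x => [|d IH] x; first by rewrite pnm_id.
by rewrite !(@pnmS _ (d + m)) ?leq_addl ?IH // (leq_trans le_nm) ?leq_addl.
Qed.

Lemma sp_pnm i m (y : S m) : i < m -> sp S i (pn i.+1 m y) = pn i m y.
Proof. by move=> lt_im; rewrite -(@pnm_comp i i.+1) // (@pnmS _ i) // pnm_id. Qed.

Lemma pnm_hom n m : is_hom (@pnm S n m).
Proof.
case: (leqP n m) => [/leq_exists_add [d ->]|lt_mn x y]; last by rewrite !pnm_gt ?gmul1.
elim: d => [|d IH] x y; first by rewrite !pnm_id.
by rewrite !(@pnmS _ (d + n)) ?leq_addl // sp_hom IH.
Qed.

Lemma pnm1 n m : pn n m (gone (S m)) = gone (S n).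
Proof. exact: hom1 (@pnm_hom n m). Qed.

Lemma pnm_closed (R : forall i, S i -> Prop) : subtower R ->
  forall n m (x : S m), n <= m -> R m x -> R n (pn n m x).
Proof.
move=> R_sp n m x /leq_exists_add [d em]; subst m; elim: d x => [|d IH] x; first by rewrite pnm_id.
by move=> Rx; rewrite (@pnmS _ (d + n)) ?leq_addl //; apply/IH/R_sp.
Qed.

Lemma thread_pnm (t : forall i, S i) n m : thread t -> n <= m -> pn n m (t m) = t n.
Proof.
move=> tt /leq_exists_add [d ->]; elim: d => [|d IH]; first by rewrite pnm_id.
by rewrite (@pnmS _ (d + n)) ?leq_addl // tt.
Qed.

End Bonding.

Lemma level_morphism_pnm (G H : invseq) (f : forall n, G n -> H n) : level_morphism f ->
  forall n m (x : G m), n <= m -> f n (pn n m x) = pn n m (f m x).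
Proof.
move=> [_ f_sp] n m x /leq_exists_add [d em]; subst m; elim: d x => [|d IH] x.
  by rewrite !pnm_id.
by rewrite !(@pnmS _ _ (d + n)) ?leq_addl // IH f_sp.
Qed.

Section ProjImage.
Variable S : invseq.

Lemma thread1 : thread (fun i => gone (S i)).
Proof. by move=> i; rewrite hom1 //; apply: sp_hom. Qed.

Lemma proj_image1 n : proj_image (gone (S n)).
Proof. by exists (fun i => gone (S i)); split=> //; apply: thread1. Qed.

Lemma proj_imageM n (x y : S n) : proj_image x -> proj_image y -> proj_image (gmul x y).
Proof.
move=> [t [tt <-]] [u [tu <-]]; exists (fun i => gmul (t i) (u i)); split=> // i.
by rewrite sp_hom tt tu.
Qed.

Lemma proj_imageV n (x : S n) : proj_image x -> proj_image (ginv x).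
Proof.
move=> [t [tt <-]]; exists (fun i => ginv (t i)); split=> // i.
by rewrite homV ?tt //; apply: sp_hom.
Qed.

Lemma proj_image_sp n (x : S n.+1) : proj_image x -> proj_image (sp S n x).
Proof. by move=> [t [tt <-]]; exists t; split. Qed.

Lemma proj_image_pnm n m (x : S m) : n <= m -> proj_image x -> proj_image (pn n m x).
Proof. exact: (pnm_closed proj_image_sp). Qed.

Lemma proj_image_lift n (x : S n) :
  proj_image x -> exists y : S n.+1, proj_image y /\ sp S n y = x.
Proof. by move=> [t [tt <-]]; exists (t n.+1); split=> //; exists t. Qed.

End ProjImage.

Lemma dfun_choice (I : Type) (T : I -> Type) (P : forall i, T i -> Prop) :
  (forall i, exists y, P i y) -> exists g : forall i, T i, forall i, P i (g i).
Proof.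
move=> hP; exists (fun i => sval (constructive_indefinite_description _ (hP i))).
by move=> i; apply: svalP.
Qed.

Lemma dependent_choice (T : nat -> Type) (Q : forall i, T i -> Prop)
    (R : forall i, T i -> T i.+1 -> Prop) (x0 : T 0) :
  Q 0 x0 -> (forall i x, Q i x -> exists y, Q i.+1 y /\ R i x y) ->
  exists u : forall i, T i, u 0 = x0 /\ forall i, Q i (u i) /\ R i (u i) (u i.+1).
Proof.
move=> Qx0 step.
have [next Hnext] : exists next : forall i, {x : T i | Q i x} -> T i.+1,
    forall i w, Q i.+1 (next i w) /\ R i (sval w) (next i w).
  apply: (dfun_choice (P := fun i g => forall w, Q i.+1 (g w) /\ R i (sval w) (g w))) => i.
  exact: (choice (fun w y => Q i.+1 y /\ R i (sval w) y) (fun w => step i _ (svalP w))).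
pose fix v i : {x : T i | Q i x} :=
  if i is i'.+1 then exist _ (next i' (v i')) (proj1 (Hnext i' (v i'))) else exist _ x0 Qx0.
exists (fun i => sval (v i)); split=> // i; split; first exact: svalP.
exact: (proj2 (Hnext i (v i))).
Qed.

(* For a subtower R this says p_(n m)(R_m) = p_(n n1)(R_(n1)) for all m >= n1. *)
Definition mittag_leffler_on (S : invseq) (R : forall i, S i -> Prop) : Prop :=
  forall n, exists n1, n <= n1 /\ forall m, n1 <= m -> forall z : S n1, R n1 z ->
    exists y : S m, R m y /\ pn n m y = pn n n1 z.

Lemma thread_through (S : invseq) (Q : forall i, S i -> Prop) :
  (forall i x, Q i x -> exists y, Q i.+1 y /\ sp S i y = x) ->
  forall n x, Q n x -> exists t, thread t /\ t n = x /\ forall i, n <= i -> Q i (t i).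
Proof.
move=> lift n x Qx.
have [u [u0 hu]] := @dependent_choice (fun i => S (i + n)) (fun i => Q (i + n))
  (fun i y y' => sp S (i + n) y' = y) x Qx (fun i => lift (i + n)).
have pn_u k i : k <= i -> pn (k + n) (i + n) (u i) = u k.
  move=> /leq_exists_add [d ->]; elim: d => [|d IH]; first by rewrite pnm_id.
  rewrite (@pnmS _ _ (d + k + n)) ?leq_add2r ?leq_addl //.
  by change (d.+1 + k) with (d + k).+1; rewrite (proj2 (hu _)).
exists (fun i => pn i (i + n) (u i)); split; last split.
- move=> i /=; rewrite sp_pnm; last by rewrite ltnS leq_addr.
  by rewrite (@pnmS _ _ (i + n)) ?leq_addr // (proj2 (hu i)).
- by rewrite (pn_u 0) ?u0.
- by move=> i /leq_exists_add [j ->]; rewrite (pn_u j) ?leq_addr //; case: (hu j).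
Qed.

Lemma mittag_leffler_on_thread (S : invseq) (R : forall i, S i -> Prop) :
  subtower R -> mittag_leffler_on R ->
  forall n, exists n1, n <= n1 /\ forall z : S n1, R n1 z ->
    exists t, thread t /\ (forall i, R i (t i)) /\ t n = pn n n1 z.
Proof.
move=> R_sp R_ml.
have [s hs] := dfun_choice R_ml.
pose St j (x : S j) := exists2 z : S (s j), R (s j) z & pn j (s j) z = x.
have St_R j x : St j x -> R j x.
  by move=> [z Rz <-]; apply: pnm_closed => //; case: (hs j).
have St_lift j x : St j x -> exists x', St j.+1 x' /\ sp S j x' = x.
  move=> [z Rz <-]; have [sj1 _] := hs j.+1; have [sj hj] := hs j.
  have [y [Ry ey]] := hj (maxn (s j) (s j.+1)) (leq_maxl _ _) z Rz.
  exists (pn j.+1 _ y); split; last by rewrite sp_pnm // (leq_trans sj1) // leq_maxr.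
  exists (pn (s j.+1) _ y); first by apply: pnm_closed => //; rewrite leq_maxr.
  by rewrite pnm_comp // leq_maxr.
move=> n; exists (s n); split=> [|z Rz]; first by case: (hs n).
have [t [tt [tn tSt]]] := thread_through St_lift (ex_intro2 _ _ z Rz erefl).
exists t; split=> //; split=> // i; case: (leqP n i) => [le_ni|lt_in].
  exact/St_R/tSt.
rewrite -(thread_pnm tt (ltnW lt_in)); apply: pnm_closed (ltnW lt_in) _ => //.
exact/St_R/tSt.
Qed.

Lemma mittag_leffler_onT (S : invseq) :
  mittag_leffler S -> mittag_leffler_on (fun i (_ : S i) => True).
Proof.
move=> S_ml n; have [n1 [lt_nn1 hn1]] := S_ml n; exists n1; split=> [|m]; first exact: ltnW.
rewrite leq_eqVlt => /orP [/eqP <-|lt_n1m] z _; first by exists z.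
by have [y ey] := proj2 (hn1 m lt_n1m (pn n n1 z)) (ex_intro _ z erefl); exists y.
Qed.

Lemma mittag_leffler_proj_image (S : invseq) : mittag_leffler S ->
  forall n, exists a, n <= a /\ forall m, a <= m -> forall x : S m, proj_image (pn n m x).
Proof.
move=> S_ml n.
have [n1 [le_nn1 hn1]] := mittag_leffler_on_thread (fun _ _ _ => I) (mittag_leffler_onT S_ml) n.
exists n1; split=> // m le_n1m x.
have [t [tt [_ tn]]] := hn1 (pn n1 m x) I.
by exists t; split=> //; rewrite tn pnm_comp.
Qed.

Lemma not_mittag_leffler_witness (S : invseq) (R : forall i, S i -> Prop) :
  ~ mittag_leffler_on R ->
  exists n (mf : nat -> nat) (zf : forall m, S m), forall m, n <= m ->
    [/\ m < mf m, R m (zf m) & forall y, R (mf m) y -> pn n (mf m) y <> pn n m (zf m)].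
Proof.
move=> /not_all_ex_not [n not_ml]; exists n.
have bad m : exists p : nat * S m, n <= m ->
    [/\ m < p.1, R m p.2 & forall y, R p.1 y -> pn n p.1 y <> pn n m p.2].
  case: (leqP n m) => [le_nm|lt_mn]; last by exists (0, gone _) => le_nm; lia.
  apply: NNPP => no_bad; apply: not_ml; exists m; split=> // m' le_mm' z Rz.
  apply: NNPP => no_y; apply: no_bad; exists (m', z) => _; split=> //=.
    by rewrite ltn_neqAle le_mm' andbT; apply/eqP => em; subst m'; case: no_y; exists z.
  by move=> y Ry e; apply: no_y; exists y.
have [g hg] := dfun_choice bad.
by exists (fun m => (g m).1), (fun m => (g m).2).
Qed.

Section ProjProd.
Variable S : invseq.
Implicit Type k : forall i, S i.

(* proj_prod k n b = p_{n n}(k_n) p_{n,n+1}(k_{n+1}) ... p_{n,b-1}(k_{b-1}); the factors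
   with index below n are the junk value 1 of pnm. *)
Fixpoint proj_prod k n b : S n :=
  if b is b'.+1 then gmul (proj_prod k n b') (pn n b' (k b')) else gone (S n).

Lemma proj_prod_small k n b : b <= n -> proj_prod k n b = gone (S n).
Proof.
elim: b => [//|b IH] lt_bn /=.
by rewrite IH 1?ltnW // pnm_gt // gmul1.
Qed.

Lemma proj_prod_solution k (d : forall i, S i) n m :
  (forall i, d i = gmul (k i) (sp S i (d i.+1))) -> n <= m ->
  d n = gmul (proj_prod k n m) (pn n m (d m)).
Proof.
move=> hd /leq_exists_add [j ->]; elim: j => [|j IH].
  by rewrite proj_prod_small // pnm_id gmul1.
rewrite IH {1}hd pnm_hom -(@pnmS _ _ (j + n)) ?leq_addl //.
by rewrite gmulA.
Qed.

Lemma eq_proj_prod k k' n b : (forall i, i < b -> k i = k' i) ->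
  proj_prod k n b = proj_prod k' n b.
Proof.
elim: b => [//|b IH] ek /=.
by rewrite IH ?ek // => i lt_ib; apply/ek/ltnW.
Qed.

Lemma proj_prod_trivial k n a b : a <= b -> (forall i, a <= i < b -> k i = gone (S i)) ->
  proj_prod k n b = proj_prod k n a.
Proof.
move=> /leq_exists_add [j ->]; elim: j => [//|j IH] k1 /=.
rewrite k1; last by rewrite leq_addl addSn ltnSn.
rewrite pnm1 mulg1 IH // => i /andP [le_ai lt_i].
by apply: k1; rewrite le_ai ltnS ltnW.
Qed.
End ProjProd.

Lemma cantor_bool_seq (c : (nat -> bool) -> nat) : ~ injective c.
Proof.
move=> c_inj.
pose dec i := epsilon (inhabits (fun _ : nat => false)) (fun e => c e = i).
pose diag i := ~~ dec i i.
have dec_diag : dec (c diag) = diag.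
  by apply/c_inj/(epsilon_spec (inhabits (fun _ : nat => false)) (fun e => c e = c diag)); exists diag.
have : diag (c diag) = ~~ dec (c diag) (c diag) by [].
by rewrite dec_diag; case: (diag (c diag)).
Qed.

Lemma countable_subset (T : Type) (A B : T -> Prop) :
  (forall x, B x -> A x) -> countable_set A -> countable_set B.
Proof.
move=> sBA [c c_inj]; exists (fun x => c (exist _ (sval x) (sBA _ (svalP x)))).
move=> [x Bx] [y By] /c_inj [exy]; subst y.
by rewrite (proof_irrelevance _ Bx By).
Qed.

(* lim^1 of the tower R vanishes: every sequence k in R is a coboundary
   k_i = d_i p_i(d_{i+1})^-1 with d in R. *)
Definition lim1_trivial_on (S : invseq) (R : forall i, S i -> Prop) : Prop :=
  forall k : forall i, S i, (forall i, R i (k i)) ->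
    exists d : forall i, S i, forall i, R i (d i) /\ d i = gmul (k i) (sp S i (d i.+1)).

Section Lim1Countable.
Variables (S : invseq) (R : forall i, S i -> Prop).
Arguments R : clear implicits.
Hypotheses (R1 : forall i, R i (gone (S i)))
  (RM : forall i x y, R i x -> R i y -> R i (gmul x y))
  (RV : forall i x, R i x -> R i (ginv x))
  (R_lim1 : lim1_trivial_on R)
  (R_count : forall i, countable_set (R i)).

Section Witness.
Variables (n : nat) (mf : nat -> nat) (zf : forall m, S m).
Hypothesis witness : forall m, n <= m ->
  [/\ m < mf m, R m (zf m) & forall y, R (mf m) y -> pn n (mf m) y <> pn n m (zf m)].

Let ms j := iter j mf n.

Let ms_ge j : n <= ms j.
Proof. by elim: j => [//|j IH]; have [lt_mf _ _] := witness IH; apply: leq_trans (ltnW lt_mf). Qed.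

Let ms_mono : {mono ms : i j / i <= j}.
Proof.
apply: leq_mono; apply: homo_ltn => [y x z|j]; first exact: ltn_trans.
by case: (witness (ms_ge j)).
Qed.

Let ms_ltn i j : (ms i < ms j) = (i < j).
Proof. by rewrite !ltnNge ms_mono. Qed.

Definition select (e : nat -> bool) i : S i :=
  if excluded_middle_informative (exists j, ms j = i /\ e j) then zf i else gone (S i).

Lemma R_select e i : R i (select e i).
Proof.
rewrite /select; case: excluded_middle_informative => [[j [ej _]]|_] //=.
by subst i; case: (witness (ms_ge j)).
Qed.

Lemma select_ms e J : select e (ms J) = if e J then zf (ms J) else gone _.
Proof.
rewrite /select; case: excluded_middle_informative => /= [[j [/(incn_inj ms_mono) ej ej']]|no_J].
  by subst j; rewrite ej'.
by case: ifP => // eJ; case: no_J; exists J.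
Qed.

Lemma select_gap e J i : ms J < i < ms J.+1 -> select e i = gone (S i).
Proof.
move=> /andP [lt_Ji lt_iJ]; rewrite /select.
case: excluded_middle_informative => [[j [ej _]]|//] /=; exfalso; subst i.
by move: lt_Ji lt_iJ; rewrite !ms_ltn; lia.
Qed.

Lemma select_prefix e e' J i : (forall j, j < J -> e j = e' j) -> i < ms J ->
  select e i = select e' i.
Proof.
move=> agree lt_iJ; rewrite /select.
have same : (exists j, ms j = i /\ e j) <-> (exists j, ms j = i /\ e' j).
  have lt_jJ j : ms j = i -> j < J by move=> ej; rewrite -ms_ltn ej.
  split=> -[j [ej ej']]; exists j; split=> //.
    by rewrite -agree ?lt_jJ.
  by rewrite agree ?lt_jJ.
by do 2 case: excluded_middle_informative => //; move=> ? ?; exfalso; tauto.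
Qed.

Lemma select_solutions_differ (e e' : nat -> bool) J (d d' : forall i, S i) :
  (forall j, j < J -> e j = e' j) -> e J -> e' J = false ->
  (forall i, R i (d i)) -> (forall i, R i (d' i)) ->
  (forall i, d i = gmul (select e i) (sp S i (d i.+1))) ->
  (forall i, d' i = gmul (select e' i) (sp S i (d' i.+1))) ->
  d n <> d' n.
Proof.
move=> agree eJ e'J Rd Rd' hd hd'.
have [lt_J not_img] : ms J < ms J.+1 /\ forall y, R (ms J.+1) y ->
    pn n (ms J.+1) y <> pn n (ms J) (zf (ms J)).
  by case: (witness (ms_ge J)).
have decomp e1 d1 : (forall i, d1 i = gmul (select e1 i) (sp S i (d1 i.+1))) ->
    d1 n = gmul (gmul (proj_prod (select e1) n (ms J)) (pn n (ms J) (select e1 (ms J))))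
                (pn n (ms J.+1) (d1 (ms J.+1))).
  move=> hd1; rewrite (proj_prod_solution hd1 (ms_ge J.+1)).
  by rewrite (proj_prod_trivial n lt_J) // => i; apply: select_gap.
rewrite (decomp e d hd) (decomp e' d' hd') !select_ms eJ e'J pnm1 mulg1.
rewrite (eq_proj_prod n (fun i => @select_prefix e e' J i agree)) -gmulA => /mulgI hz.
apply: (not_img (gmul (d' (ms J.+1)) (ginv (d (ms J.+1))))); first exact/RM/RV.
by rewrite pnm_hom (homV (@pnm_hom _ _ _)) -hz -gmulA mulgV mulg1.
Qed.

Lemma no_mittag_leffler_witness : False.
Proof.
have [D hD] := choice (fun e d => forall i, R i (d i) /\ d i = gmul (select e i) (sp S i (d i.+1)))
  (fun e => R_lim1 (R_select e)).
have [c c_inj] := R_count n.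
apply: (@cantor_bool_seq (fun e => c (exist _ (D e n) (proj1 (hD e n))))).
move=> e e' /c_inj /(congr1 sval) /= eD; apply: functional_extensionality => J.
have RD e i := proj1 (hD e i); have eqD e i := proj2 (hD e i).
elim/ltn_ind: J => J IH; case eJ: (e J); case e'J: (e' J) => //; exfalso.
  exact: (select_solutions_differ IH eJ e'J (RD e) (RD e') (eqD e) (eqD e') eD).
have IH' j : j < J -> e' j = e j by move=> ?; rewrite IH.
exact: (select_solutions_differ IH' e'J eJ (RD e') (RD e) (eqD e') (eqD e) (esym eD)).
Qed.
End Witness.

Theorem lim1_trivial_mittag_leffler : mittag_leffler_on R.
Proof.
apply: NNPP => /not_mittag_leffler_witness [n [mf [zf witness]]].
exact: no_mittag_leffler_witness witness.
Qed.
End Lim1Countable.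

Definition proj_kernel (G H : invseq) (f : forall n, G n -> H n) i (x : G i) : Prop :=
  proj_image x /\ f i x = gone (H i).
Arguments proj_kernel {G H} f i x.

Section Kernel.
Variables (G H : invseq) (f : forall n, G n -> H n).
Arguments f : clear implicits.
Hypotheses (f_level : level_morphism f) (f_lim : induces_iso_lim f).

Local Notation K := (proj_kernel f).

Let K1 i : K i (gone (G i)).
Proof. by split; [apply: proj_image1 | apply: hom1; case: f_level]. Qed.

Let KM i x y : K i x -> K i y -> K i (gmul x y).
Proof.
by move=> [Px fx] [Py fy]; split; [apply: proj_imageM | rewrite (proj1 f_level) fx fy gmul1].
Qed.

Let KV i x : K i x -> K i (ginv x).
Proof. by move=> [Px fx]; split; [apply: proj_imageV | rewrite homV ?fx ?invg1 //; case: f_level]. Qed.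

Lemma proj_kernel_subtower : subtower K.
Proof.
move=> i x [Px fx]; split; first exact: proj_image_sp.
by rewrite (proj2 f_level) fx hom1 //; apply: sp_hom.
Qed.

Lemma proj_kernel_lim1 : lim1_trivial_on K.
Proof.
have [f_hom f_sp] := f_level; move=> k Kk.
have [g [_ hg]] := @dependent_choice (fun i => G i) (fun i x => proj_image x)
  (fun i x y => sp G i y = gmul (ginv (k i)) x) (gone (G 0)) (proj_image1 _ _)
  (fun i x Px => proj_image_lift (proj_imageM (proj_imageV (proj1 (Kk i))) Px)).
have [ga [tga fga]] : exists ga, thread ga /\ forall i, f i (ga i) = f i (g i).
  apply: (proj2 f_lim) => i.
  by rewrite -f_sp (proj2 (hg i)) f_hom homV // (proj2 (Kk i)) invg1 gmul1.
exists (fun i => gmul (g i) (ginv (ga i))) => i; split; first split.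
- by apply: proj_imageM (proj1 (hg i)) (proj_imageV _); exists ga.
- by rewrite f_hom homV // fga mulgV.
- by rewrite sp_hom (homV (@sp_hom G i)) tga (proj2 (hg i)) -gmulA mulKVg.
Qed.

Lemma proj_kernel_vanishes : (forall n, countable_set (@proj_image G n)) ->
  forall n, exists c, n <= c /\ forall m, c <= m -> forall x : G m, K m x -> pn n m x = gone (G n).
Proof.
move=> G_count.
have K_ml : mittag_leffler_on K.
  apply: lim1_trivial_mittag_leffler K1 KM KV proj_kernel_lim1 _ => i.
  exact: countable_subset (fun x (Kx : K i x) => proj1 Kx) (G_count i).
move=> n; have [n1 [le_nn1 hn1]] := mittag_leffler_on_thread proj_kernel_subtower K_ml n.
exists n1; split=> // m le_n1m x Kx.
have [t [tt [Kt tn]]] := hn1 _ (pnm_closed proj_kernel_subtower le_n1m Kx).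
rewrite -(pnm_comp _ le_nn1 le_n1m) -tn.
apply: (proj1 f_lim t _ tt (@thread1 G)) => i.
by rewrite (proj2 (Kt i)) hom1 //; apply: (proj1 f_level).
Qed.
End Kernel.

Definition stable_index (S : invseq) n : nat :=
  epsilon (inhabits 0) (fun a => n <= a /\
    forall m, a <= m -> forall x : S m, proj_image (pn n m x)).

Lemma stable_indexP (S : invseq) : mittag_leffler S -> forall n,
  n <= stable_index S n /\
  forall m, stable_index S n <= m -> forall x : S m, proj_image (pn n m x).
Proof. by move=> S_ml n; apply: epsilon_spec (mittag_leffler_proj_image S_ml n). Qed.

Section TowerInverse.
Variables (G H : invseq) (f : forall n, G n -> H n).
Arguments f : clear implicits.

Definition kernel_index n : nat :=
  epsilon (inhabits 0) (fun c => n <= c /\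
    forall m, c <= m -> forall x : G m, proj_kernel f m x -> pn n m x = gone (G n)).

Definition kernel_bound n : nat := \max_(i < n.+1) kernel_index i.

Definition inv_index n : nat := stable_index H (kernel_bound n).

Definition inv_map n (y : H (inv_index n)) : G n :=
  pn n (kernel_bound n) (epsilon (inhabits (gone _)) (fun x =>
    proj_image x /\ f (kernel_bound n) x = pn (kernel_bound n) (inv_index n) y)).

Hypotheses (f_level : level_morphism f) (f_lim : induces_iso_lim f)
  (G_count : forall n, countable_set (@proj_image G n)).

Lemma kernel_bound_ge n : n <= kernel_bound n.
Proof.
have [le_n _] := epsilon_spec (inhabits 0) _ (proj_kernel_vanishes f_level f_lim G_count n).
exact: leq_trans le_n (leq_bigmax (F := fun i : 'I_n.+1 => kernel_index i) ord_max).
Qed.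

Lemma kernel_bound_mono : {homo kernel_bound : n n' / n <= n'}.
Proof.
move=> n n' le_nn'; apply/bigmax_leqP => i _.
by rewrite -[i : nat]/(widen_ord (le_nn' : n < n'.+1) i : nat) leq_bigmax.
Qed.

Lemma kernel_bound_vanishes n m (x : G m) : kernel_bound n <= m ->
  proj_kernel f m x -> pn n m x = gone (G n).
Proof.
have [_ vanish] := epsilon_spec (inhabits 0) _ (proj_kernel_vanishes f_level f_lim G_count n).
move=> le_km; apply: vanish; apply: leq_trans le_km.
exact: (leq_bigmax (F := fun i : 'I_n.+1 => kernel_index i) ord_max).
Qed.

Hypothesis H_ml : mittag_leffler H.

Lemma inv_index_ge n : kernel_bound n <= inv_index n.
Proof. exact: proj1 (stable_indexP H_ml _). Qed.

Lemma inv_mapP n (y : H (inv_index n)) : exists x,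
  (proj_image x /\ f (kernel_bound n) x = pn (kernel_bound n) (inv_index n) y) /\
  inv_map y = pn n (kernel_bound n) x.
Proof.
have [h [th hy]] := proj2 (stable_indexP H_ml _) _ (leqnn _) y.
have [g [tg fg]] := proj2 f_lim h th.
have ex : exists x, proj_image x /\
    f (kernel_bound n) x = pn (kernel_bound n) (inv_index n) y.
  by exists (g (kernel_bound n)); split; [exists g | rewrite fg].
by eexists; split; last reflexivity; exact: (epsilon_spec _ _ ex).
Qed.

Lemma inv_map_eq n (y : H (inv_index n)) (z : G (kernel_bound n)) : proj_image z ->
  f _ z = pn (kernel_bound n) (inv_index n) y -> inv_map y = pn n (kernel_bound n) z.
Proof.
move=> Pz fz; have [x [[Px fx] ->]] := inv_mapP y; have [f_hom _] := f_level.
apply: eq_mulVg1; rewrite -(homV (@pnm_hom _ _ _)) -pnm_hom.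
apply: kernel_bound_vanishes => //; split; first exact/proj_imageM/Px/proj_imageV.
by rewrite f_hom homV // fz fx gmulV.
Qed.

Lemma inv_map_hom n : is_hom (@inv_map n).
Proof.
move=> y y'; have [f_hom _] := f_level.
have [x [[Px fx] ->]] := inv_mapP y; have [x' [[Px' fx'] ->]] := inv_mapP y'.
rewrite (inv_map_eq (proj_imageM Px Px')); first exact: pnm_hom.
by rewrite f_hom fx fx' pnm_hom.
Qed.

Lemma inv_map_tmor : @is_tmor H G inv_index inv_map.
Proof.
split=> [|n n' lt_nn']; first exact: inv_map_hom.
set m := maxn (inv_index n) (inv_index n').
exists m; split; [exact: leq_maxl | split=> [|y]; first exact: leq_maxr].
have [x' [[Px' fx'] ->]] := inv_mapP (pn (inv_index n') m y).
have le_kk := kernel_bound_mono (ltnW lt_nn').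
rewrite (inv_map_eq (proj_image_pnm le_kk Px')).
  by rewrite !pnm_comp ?kernel_bound_ge // (leq_trans (ltnW lt_nn')) ?kernel_bound_ge.
by rewrite level_morphism_pnm // fx' !pnm_comp ?leq_maxl ?leq_maxr ?inv_index_ge //;
  apply: leq_trans le_kk (inv_index_ge n').
Qed.

Lemma inv_map_right_inverse :
  @tequiv H H (tcomp_idx inv_index tid_idx) (@tcomp_map H G H inv_index inv_map tid_idx f)
    tid_idx (@tid_map H).
Proof.
move=> n; exists (inv_index n); split=> //; split.
  exact: leq_trans (kernel_bound_ge n) (inv_index_ge n).
move=> y; rewrite pnm_id /tcomp_map /tid_map.
have [x [[Px fx] ->]] := inv_mapP y.
by rewrite level_morphism_pnm ?kernel_bound_ge // fx pnm_comp ?kernel_bound_ge ?inv_index_ge.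
Qed.

Hypothesis G_ml : mittag_leffler G.

Lemma inv_map_left_inverse :
  @tequiv G G (tcomp_idx tid_idx inv_index) (@tcomp_map G H G tid_idx f inv_index inv_map)
    tid_idx (@tid_map G).
Proof.
move=> n; set m := maxn (inv_index n) (stable_index G (kernel_bound n)).
have le_km : kernel_bound n <= m := leq_trans (inv_index_ge n) (leq_maxl _ _).
exists m; split; [exact: leq_maxl | split=> [|x]; first exact: leq_trans (kernel_bound_ge n) le_km].
rewrite /tcomp_map /tid_map (inv_map_eq (proj2 (stable_indexP G_ml _) _ (leq_maxr _ _) x)).
  by rewrite pnm_comp ?kernel_bound_ge.
by rewrite !level_morphism_pnm ?leq_maxl // pnm_comp ?inv_index_ge ?leq_maxl.
Qed.
End TowerInverse.

Theorem theorem8p17 (G H : invseq) (f : forall n, G n -> H n) :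
  @level_morphism G H f ->
  @induces_iso_lim G H f ->
  mittag_leffler G -> mittag_leffler H ->
  (forall n, @countable_set (G n) (@proj_image G n)) ->
  @tower_iso G H tid_idx f.
Proof.
move=> f_level f_lim G_ml H_ml G_count.
exists (inv_index f), (@inv_map G H f); split.
  exact: inv_map_tmor.
by split; [apply: inv_map_left_inverse | apply: inv_map_right_inverse].
Qed.
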